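(* Let $\tau$ be a topology on $\omega^\omega$ such that the standard foliage tree $\mathbf S$ is a $\pi$-tree on $(\omega^\omega,\tau)$. Let $Y=\bigcap_{n\in\omega}U_n$, where each $U_n$ is an open $\pi$-dense subset of the Baire space $(\omega^\omega,\tau_{\mathcal N})$. Then $Y$, as a subspace of $(\omega^\omega,\tau)$, has a $\pi$-tree.
   Context: $\tau_{\mathcal N}$ is the product topology on $\omega^\omega$ ($\omega$ discrete); $(\omega^\omega,\tau_{\mathcal N})$ is the Baire space. A tree is a pair $(Q,<)$ with $<$ irreflexive transitive and every set of predecessors well-ordered; $\mathrm{sons}(x)$ = immediate successors of $x$; a branch is a maximal chain. A foliage tree is $\mathbf F=(\mathcal T,l)$ with $\mathcal T$ a tree and leaves $\mathbf F_x=l(x)$ at nodes $x$. The standard foliage tree $\mathbf S$ has skeleton $(\omega^{<\omega},\subsetneq)$ and leaves $\mathbf S_x=\{p\in\omega^\omega: x\subseteq p\}$. For $A\subseteq\omega^\omega$: $A$ is $\pi$-dense in the Baire space iff for every $y\in\omega^{<\omega}$ the set $\{n\in\omega:\mathbf S_{y^\frown\langle n\rangle}\subseteq A\}$ is infinite. $\mathrm{fruit}_{\mathbf F}(A)=\bigcap_{x\in A}\mathbf F_x$; $\mathrm{shoot}_{\mathbf F}(z)=\{\bigcup_{s\in C}\mathbf F_s:C$ cofinite in $\mathrm{sons}(z)\}$; $\mathrm{scope}_{\mathbf F}(p)=\{y:p\in\mathbf F_y\}$; $\gamma\gg\delta$ means every nonempty $D\in\delta$ contains some nonempty $G\in\gamma$.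 A Baire foliage tree on a space $X$ is a foliage tree whose skeleton is isomorphic to $(\omega^{<\omega},\subsetneq)$, all of whose leaves are open in $X$, which is locally strict (for each non-maximal $x$, $\mathbf F_x$ is the disjoint union of the $\mathbf F_s$, $s\in\mathrm{sons}(x)$), has strict branches (at least one node, and $\mathrm{fruit}_{\mathbf F}(B)$ is a singleton for every branch $B$), and whose leaf at the least node is $X$. $\mathbf F$ grows into $X$ if for every $p\in X$ and every neighbourhood $U$ of $p$ in $X$ there is $z\in\mathrm{scope}_{\mathbf F}(p)$ with $\mathrm{shoot}_{\mathbf F}(z)\gg\{U\}$. A $\pi$-tree on $X$ is a Baire foliage tree on $X$ that grows into $X$. *)

From Stdlib Require Import List Arith.
Import ListNotations.

Definition baire := nat -> nat.

Definition is_topology {T : Type} (O : (T -> Prop) -> Prop) : Prop :=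
  O (fun _ => True) /\
  (forall U V, O U -> O V -> O (fun x => U x /\ V x)) /\
  (forall Fam : (T -> Prop) -> Prop, (forall U, Fam U -> O U) ->
     O (fun x => exists U, Fam U /\ U x)).

Definition open_in {T : Type} (O : (T -> Prop) -> Prop) (X V : T -> Prop) : Prop :=
  exists U, O U /\ forall x, V x <-> (U x /\ X x).

Definition sprefix (x y : list nat) : Prop := x <> y /\ exists z, y = x ++ z.

Definition sons (z s : list nat) : Prop := exists n, s = z ++ [n].

Definition is_chain (C : list nat -> Prop) : Prop :=
  forall x y, C x -> C y -> x = y \/ sprefix x y \/ sprefix y x.

Definition is_branch (C : list nat -> Prop) : Prop :=
  is_chain C /\
  forall D, is_chain D -> (forall x, C x -> D x) -> forall x, D x -> C x.

Definition fruit {T : Type} (F : list nat -> T -> Prop) (A : list nat -> Prop) : T -> Prop :=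
  fun q => forall x, A x -> F x q.

Definition is_finite {A : Type} (P : A -> Prop) : Prop :=
  exists l : list A, forall a, P a -> In a l.

Definition cofinite_in_sons (z : list nat) (C : list nat -> Prop) : Prop :=
  (forall s, C s -> sons z s) /\ is_finite (fun s => sons z s /\ ~ C s).

Definition shoot {T : Type} (F : list nat -> T -> Prop) (z : list nat) : (T -> Prop) -> Prop :=
  fun G => exists C, cofinite_in_sons z C /\
                     forall q, G q <-> exists s, C s /\ F s q.

Definition scope {T : Type} (F : list nat -> T -> Prop) (p : T) : list nat -> Prop :=
  fun y => F y p.

Definition gg {T : Type} (gamma delta : (T -> Prop) -> Prop) : Prop :=
  forall D, delta D -> (exists q, D q) ->
    exists G, gamma G /\ (exists q, G q) /\ (forall q, G q -> D q).

Definition locally_strict {T : Type} (F : list nat -> T -> Prop) : Prop :=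
  forall x, (exists s, sons x s) ->
    (forall q, F x q <-> exists s, sons x s /\ F s q) /\
    (forall s t q, sons x s -> sons x t -> s <> t -> F s q -> F t q -> False).

Definition strict_branches {T : Type} (F : list nat -> T -> Prop) : Prop :=
  forall B, is_branch B -> exists p, forall q, fruit F B q <-> q = p.

Definition baire_foliage_tree {T : Type} (O : (T -> Prop) -> Prop) (X : T -> Prop)
  (F : list nat -> T -> Prop) : Prop :=
  (forall x, open_in O X (F x)) /\
  locally_strict F /\
  strict_branches F /\
  (forall q, F [] q <-> X q).

Definition grows_into {T : Type} (O : (T -> Prop) -> Prop) (X : T -> Prop)
  (F : list nat -> T -> Prop) : Prop :=
  forall p U, X p -> open_in O X U -> U p ->
    exists z, scope F p z /\ gg (shoot F z) (fun D => D = U).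

Definition pi_tree {T : Type} (O : (T -> Prop) -> Prop) (X : T -> Prop)
  (F : list nat -> T -> Prop) : Prop :=
  baire_foliage_tree O X F /\ grows_into O X F.

Definition S_std (x : list nat) : baire -> Prop :=
  fun p => forall i, i < length x -> p i = nth i x 0.

Definition baire_open (U : baire -> Prop) : Prop :=
  forall p, U p -> exists k, forall q, (forall i, i < k -> q i = p i) -> U q.

Definition pi_dense (A : baire -> Prop) : Prop :=
  forall y : list nat,
    ~ is_finite (fun n => forall p, S_std (y ++ [n]) p -> A p).

(* Since the cylinders [S_std x] are tau-open, every open set of the Baire space is tau-open,
   so it suffices to build a tree whose leaves are [Y] intersected with Baire-open regions.
   A cylinder [S_u] already inside [U 0], ..., [U (K-1)] is split by the next digit when
   [S_u] lies inside [U K] too.  Otherwise ([u] is "bad" for [K]) every point of [Y] in [S_u]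
   has a longest bad prefix [t], after which its cylinder lies inside [U K].  The bad extensions
   [t] of [u] are arranged into countably many finite threads; a node on a thread has one son
   continuing the thread and infinitely many sons that are cylinders inside [U K].  As threads are
   finite, the level [K] is unbounded along every branch, so the fruit of a branch is a single point
   of [Y].  Growth is inherited from [S_std]: along the path of a point [p], every prefix [z]
   of [p] becomes the stem of a node whose sons are eventually cylinders over infinitely many
   sons of [z]. *)

From Stdlib Require Import List Arith Lia Wf_nat Cantor.
From Stdlib Require Import Classical ClassicalEpsilon FunctionalExtensionality.
Import ListNotations.

Definition infinite_nat (P : nat -> Prop) : Prop := forall m, exists n, m <= n /\ P n.

Lemma not_finite_infinite_nat (P : nat -> Prop) : ~ is_finite P -> infinite_nat P.
Proof.
  intros HP m. apply NNPP. intro Hno. apply HP. exists (seq 0 m). intros a Ha.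
  apply in_seq. split; [lia|]. destruct (le_lt_dec m a); [|lia].
  exfalso. apply Hno. eauto.
Qed.

Lemma least_exists (P : nat -> Prop) :
  (exists n, P n) -> exists n, P n /\ forall k, P k -> n <= k.
Proof.
  intro HP. destruct (dec_inh_nat_subset_has_unique_least_element P) as [n [Hn _]];
    [intro; apply classic|exact HP|eauto].
Qed.

Definition least_from (P : nat -> Prop) (m : nat) : nat :=
  epsilon (inhabits 0) (fun n => (m <= n /\ P n) /\ forall k, m <= k -> P k -> n <= k).

Fixpoint enum (P : nat -> Prop) (k : nat) : nat :=
  match k with 0 => least_from P 0 | S k => least_from P (S (enum P k)) end.

Section Enumeration.
Variable P : nat -> Prop.
Hypothesis HP : infinite_nat P.

Lemma least_from_spec m :
  (m <= least_from P m /\ P (least_from P m)) /\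
  forall k, m <= k -> P k -> least_from P m <= k.
Proof.
  unfold least_from. apply epsilon_spec.
  destruct (least_exists (fun n => m <= n /\ P n) (HP m)) as [n [Hn Hmin]].
  exists n. split; [exact Hn|]. intros k Hk Pk. apply Hmin. auto.
Qed.

Lemma enum_in k : P (enum P k).
Proof. destruct k; apply least_from_spec. Qed.

Lemma enum_lt_succ k : enum P k < enum P (S k).
Proof. destruct (least_from_spec (S (enum P k))) as [[H _] _]. exact H. Qed.

Lemma enum_mono i j : i < j -> enum P i < enum P j.
Proof.
  induction 1 as [|j _ IH]; [apply enum_lt_succ|].
  pose proof (enum_lt_succ j). lia.
Qed.

Lemma enum_inj i j : enum P i = enum P j -> i = j.
Proof.
  intro Heq. destruct (lt_eq_lt_dec i j) as [[Hl|Hl]|Hl]; auto;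
    [pose proof (enum_mono i j Hl)|pose proof (enum_mono j i Hl)]; lia.
Qed.

Lemma enum_ge k : k <= enum P k.
Proof. induction k; [lia|]. pose proof (enum_lt_succ k). lia. Qed.

Lemma enum_surj n : P n -> exists k, enum P k = n.
Proof.
  intro Pn. destruct (least_exists (fun k => n <= enum P k)) as [[|k] [Hk Hmin]].
  - exists n. apply enum_ge.
  - exists 0. apply Nat.le_antisymm; [apply least_from_spec; auto with arith|exact Hk].
  - exists (S k). apply Nat.le_antisymm; [|exact Hk].
    apply least_from_spec; [|exact Pn].
    destruct (le_lt_dec n (enum P k)) as [Hle|Hlt]; [|exact Hlt].
    specialize (Hmin k Hle). lia.
Qed.

End Enumeration.

Fixpoint code (l : list nat) : nat :=
  match l with [] => 0 | a :: l => S (Cantor.to_nat (a, code l)) end.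

Lemma code_inj l1 l2 : code l1 = code l2 -> l1 = l2.
Proof.
  revert l2. induction l1 as [|a l1 IH]; intros [|b l2] H; try discriminate; auto.
  apply Nat.succ_inj, Cantor.to_nat_inj in H. injection H as -> H.
  f_equal. apply IH, H.
Qed.

Lemma code_ge_length l : length l <= code l.
Proof.
  induction l as [|a l IH]; simpl; [lia|].
  pose proof (Cantor.to_nat_non_decreasing a (code l)). lia.
Qed.

Lemma is_finite_bounded (P : nat -> Prop) : is_finite P -> exists M, forall n, P n -> n <= M.
Proof.
  intros [l Hl]. exists (fold_right max 0 l). intros n Hn. specialize (Hl n Hn).
  induction l as [|b l IH]; simpl in *; [tauto|]. destruct Hl as [->|H]; [lia|].
  specialize (IH H). lia.
Qed.

Definition init (b : baire) (j : nat) : list nat := map b (seq 0 j).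

Lemma init_length b j : length (init b j) = j.
Proof. unfold init. rewrite length_map, length_seq. reflexivity. Qed.

Lemma init_nth b j i : i < j -> nth i (init b j) 0 = b i.
Proof.
  intro H. unfold init. rewrite nth_indep with (d' := b 0) by (rewrite length_map, length_seq; lia).
  rewrite map_nth, seq_nth by lia. reflexivity.
Qed.

Lemma init_S b j : init b (S j) = init b j ++ [b j].
Proof. unfold init. rewrite seq_S, map_app. reflexivity. Qed.

Lemma S_std_init x b : S_std x b <-> x = init b (length x).
Proof.
  split.
  - intro H. apply nth_ext with (d := 0) (d' := 0); [rewrite init_length; reflexivity|].
    intros i Hi. rewrite init_nth by lia. symmetry. apply H, Hi.
  - intros H i Hi. rewrite H, init_nth; [reflexivity|].
    rewrite H, init_length in Hi. exact Hi.
Qed.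

Lemma S_std_init_self b j : S_std (init b j) b.
Proof. intros i Hi. rewrite init_length in Hi. rewrite init_nth; auto. Qed.

Lemma S_std_nil q : S_std [] q.
Proof. intros i Hi. simpl in Hi. lia. Qed.

Lemma S_std_snoc s n q : S_std (s ++ [n]) q <-> S_std s q /\ q (length s) = n.
Proof.
  rewrite !S_std_init, length_app, Nat.add_1_r, init_S. split.
  - intro H. apply app_inj_tail in H. destruct H as [-> [= ->]]. rewrite init_length. auto.
  - intros [-> <-]. rewrite init_length. reflexivity.
Qed.

Definition prefix (a b : list nat) : Prop := exists z, b = a ++ z.

Lemma prefix_refl a : prefix a a.
Proof. exists []. rewrite app_nil_r. reflexivity. Qed.

Lemma prefix_trans a b c : prefix a b -> prefix b c -> prefix a c.
Proof. intros [z1 ->] [z2 ->]. exists (z1 ++ z2). rewrite app_assoc. reflexivity. Qed.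

Lemma prefix_app a z : prefix a (a ++ z).
Proof. exists z. reflexivity. Qed.

Lemma prefix_length a b : prefix a b -> length a <= length b.
Proof. intros [z ->]. rewrite length_app. lia. Qed.

Lemma prefix_nth a b i : prefix a b -> i < length a -> nth i a 0 = nth i b 0.
Proof. intros [z ->] Hi. rewrite app_nth1; auto. Qed.

Lemma prefix_firstn y n : prefix (firstn n y) y.
Proof. exists (skipn n y). symmetry. apply firstn_skipn. Qed.

Lemma prefix_firstn_mono y n m : n <= m -> prefix (firstn n y) (firstn m y).
Proof.
  intro H. replace (firstn n y) with (firstn n (firstn m y))
    by (rewrite firstn_firstn, Nat.min_l; auto).
  apply prefix_firstn.
Qed.

Lemma prefix_eq_firstn a y : prefix a y -> a = firstn (length a) y.
Proof.
  intros [z ->]. rewrite firstn_app, Nat.sub_diag, firstn_O, app_nil_r, firstn_all. reflexivity.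
Qed.

Lemma S_std_prefix a b q : prefix a b -> S_std b q -> S_std a q.
Proof.
  intros Hp Hb i Hi. rewrite (prefix_nth a b i Hp Hi). apply Hb.
  pose proof (prefix_length a b Hp). lia.
Qed.

Lemma S_std_prefix_of_le a b q : S_std a q -> S_std b q -> length a <= length b -> prefix a b.
Proof.
  intros Ha Hb Hl. apply S_std_init in Ha, Hb. rewrite Ha, Hb.
  exists (map q (seq (length a) (length b - length a))).
  unfold init. rewrite <- map_app, <- seq_app. f_equal. f_equal. lia.
Qed.

Lemma S_std_length_inj a b q : S_std a q -> S_std b q -> length a = length b -> a = b.
Proof.
  intros Ha Hb Hl. apply S_std_init in Ha, Hb. rewrite Ha, Hb, Hl. reflexivity.
Qed.

Definition comparable (x y : list nat) : Prop := prefix x y \/ prefix y x.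

Lemma chain_comparable C x y : is_chain C -> C x -> C y -> comparable x y.
Proof.
  intros H Hx Hy. destruct (H x y Hx Hy) as [->|[[_ Hp]|[_ Hp]]].
  - left. apply prefix_refl.
  - left. exact Hp.
  - right. exact Hp.
Qed.

Lemma comparable_chain_rel x y : comparable x y -> x = y \/ sprefix x y \/ sprefix y x.
Proof.
  intros [Hp|Hp]; destruct (list_eq_dec Nat.eq_dec x y) as [->|Hne]; auto;
    [right; left|right; right]; split; auto.
Qed.

Lemma comparable_of_S_std a b q : S_std a q -> S_std b q -> comparable a b.
Proof.
  intros Ha Hb. destruct (le_lt_dec (length a) (length b)).
  - left. apply (S_std_prefix_of_le a b q); auto.
  - right. apply (S_std_prefix_of_le b a q); auto. lia.
Qed.

Lemma comparable_prefixes a b y : prefix a y -> prefix b y -> comparable a b.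
Proof.
  intros Ha Hb. set (q := fun i => nth i y 0).
  assert (Hy : S_std y q) by (intros i _; reflexivity).
  apply (comparable_of_S_std a b q); eapply S_std_prefix; eauto.
Qed.

Section Branch.
Variable B : list nat -> Prop.
Hypothesis HB : is_branch B.

Lemma branch_add y : (forall z, B z -> comparable z y) -> B y.
Proof.
  destruct HB as [Hc Hm]. intro Hy. apply (Hm (fun z => B z \/ z = y)).
  - intros a b [Ha| ->] [Hb| ->].
    + apply Hc; auto.
    + apply comparable_chain_rel, Hy, Ha.
    + destruct (Hy b Hb); apply comparable_chain_rel; [right|left]; auto.
    + left; reflexivity.
  - intros; left; auto.
  - right; reflexivity.
Qed.

Lemma branch_prefix_closed x y : B y -> prefix x y -> B x.
Proof.
  intros Hy Hxy. apply branch_add. intros z Hz.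
  destruct (chain_comparable B z y (proj1 HB) Hz Hy) as [Hzy|Hyz].
  - apply comparable_prefixes with y; auto.
  - right. apply prefix_trans with y; auto.
Qed.

Lemma branch_unbounded n : exists x, B x /\ n <= length x.
Proof.
  induction n as [|n [x [Hx Hn]]].
  - exists []. split; [|lia]. apply branch_add. intros z _. right. exists z. reflexivity.
  - destruct (classic (exists y, B y /\ S n <= length y)) as [Hy|Hno]; [exact Hy|].
    exists (x ++ [0]). rewrite length_app. split; [|simpl; lia].
    apply branch_add. intros z Hz. left. apply prefix_trans with x; [|apply prefix_app].
    destruct (chain_comparable B z x (proj1 HB) Hz Hx) as [Hp|[w ->]]; auto.
    destruct w as [|a w]; [rewrite app_nil_r; apply prefix_refl|].
    exfalso. apply Hno. exists (x ++ a :: w). rewrite length_app. simpl. split; [auto|lia].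
Qed.

Lemma branch_length n : exists x, B x /\ length x = n.
Proof.
  destruct (branch_unbounded n) as [y [Hy Hn]]. exists (firstn n y).
  rewrite length_firstn. split; [|lia].
  apply branch_prefix_closed with y; auto. apply prefix_firstn.
Qed.

End Branch.

Lemma branch_is_cylinders B : is_branch B -> exists b, forall x, B x <-> S_std x b.
Proof.
  intro HB.
  set (xs := fun n => epsilon (inhabits []) (fun x => B x /\ length x = n)).
  assert (Hxs : forall n, B (xs n) /\ length (xs n) = n).
  { intro n. unfold xs. apply epsilon_spec. apply branch_length, HB. }
  assert (Hagree : forall x i, B x -> i < length x -> nth i x 0 = nth i (xs (S i)) 0).
  { intros x i Hx Hi. destruct (Hxs (S i)) as [H1 H2].
    destruct (chain_comparable B x (xs (S i)) (proj1 HB) Hx H1) as [Hp|Hp];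
      [|symmetry]; apply prefix_nth; auto; lia. }
  exists (fun i => nth i (xs (S i)) 0). intro x. split.
  - intros Hx i Hi. symmetry. apply Hagree; auto.
  - intro Hx. destruct (Hxs (length x)) as [H1 H2].
    replace x with (xs (length x)); auto.
    apply nth_ext with (d := 0) (d' := 0); auto.
    intros i Hi. rewrite H2 in Hi. rewrite <- (Hx i Hi). apply Hagree; auto. lia.
Qed.

Section Construction.
Variable U : nat -> baire -> Prop.
Hypothesis HU : forall n, baire_open (U n) /\ pi_dense (U n).

Definition Y (q : baire) : Prop := forall n, U n q.
Definition inU (K : nat) (s : list nat) : Prop := forall q, S_std s q -> U K q.
Definition good (K : nat) (s : list nat) (n : nat) : Prop := inU K (s ++ [n]).

Lemma good_infinite K s : infinite_nat (good K s).
Proof. apply not_finite_infinite_nat, (proj2 (HU K) s). Qed.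

Lemma inU_prefix K a b : prefix a b -> inU K a -> inU K b.
Proof. intros Hp H q Hq. apply H, (S_std_prefix a b); auto. Qed.

Lemma good_above_bad K s n t q : good K s n -> S_std (s ++ [n]) q -> S_std t q ->
  ~ inU K t -> length s < length t -> False.
Proof.
  intros Hg Hs Ht Hb Hl. apply Hb, inU_prefix with (s ++ [n]); auto.
  apply (S_std_prefix_of_le _ _ q); auto. rewrite length_app. simpl. lia.
Qed.

Lemma bad_extensions_unbounded K s : ~ inU K s ->
  forall L, exists t, prefix s t /\ ~ inU K t /\ L <= length t.
Proof.
  intros Hs L. induction L as [|L [t [Hst [Ht HL]]]].
  - exists s. split; [apply prefix_refl|]. split; auto. lia.
  - assert (Hr : exists r, ~ inU K (t ++ [r])).
    { apply NNPP. intro Hno. apply Ht. intros q Hq.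
      apply NNPP. intro HK. apply Hno. exists (q (length t)). intro Hg.
      apply HK, Hg, S_std_snoc. auto. }
    destruct Hr as [r Hr]. exists (t ++ [r]).
    split; [apply prefix_trans with t; auto; apply prefix_app|].
    split; auto. rewrite length_app. simpl. lia.
Qed.

Lemma last_bad_prefix K u q : U K q -> S_std u q -> ~ inU K u ->
  exists d, length u <= d /\ ~ inU K (init q d) /\ good K (init q d) (q d).
Proof.
  intros HK Hu Hb. destruct (proj1 (HU K) q HK) as [k Hk].
  assert (Hgood : inU K (init q (max k (length u)))).
  { intros r Hr. apply Hk. intros i Hi. rewrite (Hr i) by (rewrite init_length; lia).
    apply init_nth. lia. }
  assert (Hu' : init q (length u) = u) by (symmetry; apply S_std_init, Hu).
  induction (Nat.le_max_r k (length u)) as [|m Hm IH].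
  - exfalso. rewrite Hu' in Hgood. exact (Hb Hgood).
  - destruct (classic (inU K (init q m))) as [Hin|Hout]; [exact (IH Hin)|].
    exists m. split; [exact Hm|]. split; [exact Hout|]. unfold good. rewrite <- init_S. exact Hgood.
Qed.

Definition bad_ext (u : list nat) (K : nat) (t : list nat) : Prop := prefix u t /\ ~ inU K t.

(* The bad extensions [t] of [u] are indexed by their codes [c]; unused indices point to [u]. *)
Definition target (u : list nat) (K c : nat) : list nat :=
  match excluded_middle_informative (exists t, bad_ext u K t /\ code t = c) with
  | left H => proj1_sig (constructive_indefinite_description _ H)
  | right _ => u
  end.

Definition on_thread (u : list nat) (K : nat) (s : list nat) (c : nat) : Prop :=
  prefix s (target u K c).

(* The good sons of [s] are shared out among the infinitely many threads through [s]:
   the [k]-th one goes to the [a]-th thread, where [k] codes the pair [(a, b)]. *)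
Definition piece (u : list nat) (K c : nat) (s : list nat) (n : nat) : Prop :=
  good K s n /\ exists a b,
    enum (good K s) (Cantor.to_nat (a, b)) = n /\ enum (on_thread u K s) a = c.

Section Threads.
Variables (u : list nat) (K : nat).
Hypothesis Hu : ~ inU K u.

Lemma target_bad_ext c : bad_ext u K (target u K c).
Proof.
  unfold target. destruct excluded_middle_informative as [H|_].
  - apply (proj2_sig (constructive_indefinite_description _ H)).
  - split; [apply prefix_refl|exact Hu].
Qed.

Lemma target_code t : bad_ext u K t -> target u K (code t) = t.
Proof.
  intro Ht. unfold target. destruct excluded_middle_informative as [H|H].
  - apply code_inj, (proj2_sig (constructive_indefinite_description _ H)).
  - exfalso. eauto.
Qed.

Lemma on_thread_infinite s : prefix u s -> ~ inU K s -> infinite_nat (on_thread u K s).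
Proof.
  intros Hus Hs m. destruct (bad_extensions_unbounded K s Hs m) as [t [Hst [Ht Hm]]].
  assert (Hut : bad_ext u K t) by (split; [apply prefix_trans with s|]; auto).
  exists (code t). split.
  - pose proof (code_ge_length t). lia.
  - unfold on_thread. rewrite target_code; auto.
Qed.

Section Pieces.
Variable s : list nat.
Hypotheses (Hus : prefix u s) (Hs : ~ inU K s).

Lemma piece_infinite c : on_thread u K s c -> infinite_nat (piece u K c s).
Proof.
  intro Hc. destruct (enum_surj _ (on_thread_infinite s Hus Hs) c Hc) as [a Ha].
  intro m. exists (enum (good K s) (Cantor.to_nat (a, m))). split.
  - pose proof (enum_ge _ (good_infinite K s) (Cantor.to_nat (a, m))).
    pose proof (Cantor.to_nat_non_decreasing a m). lia.
  - split; [apply enum_in, good_infinite|]. exists a, m. auto.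
Qed.

Lemma piece_on_thread c n : piece u K c s n -> on_thread u K s c.
Proof.
  intros [_ [a [b [_ <-]]]]. apply enum_in, on_thread_infinite; auto.
Qed.

End Pieces.

Lemma piece_exists s n : good K s n -> exists c, piece u K c s n.
Proof.
  intro Hg. destruct (enum_surj _ (good_infinite K s) n Hg) as [k Hk].
  destruct (Cantor.of_nat k) as [a b] eqn:Hab.
  exists (enum (on_thread u K s) a). split; auto. exists a, b. split; auto.
  rewrite <- Hab, Cantor.cancel_to_of. exact Hk.
Qed.

Lemma piece_unique c c' s n : piece u K c s n -> piece u K c' s n -> c = c'.
Proof.
  intros [_ [a [b [H1 <-]]]] [_ [a' [b' [H1' <-]]]].
  rewrite <- H1' in H1. apply enum_inj, Cantor.to_nat_inj in H1; [|apply good_infinite].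
  injection H1 as -> ->. reflexivity.
Qed.

End Threads.

Definition stage (u : list nat) (K c i : nat) : list nat := firstn (length u + i) (target u K c).
Definition depth (u : list nat) (K c : nat) : nat := length (target u K c) - length u.

Section Stages.
Variables (u : list nat) (K c : nat).
Hypothesis Hu : ~ inU K u.

Lemma stage_length i : i <= depth u K c -> length (stage u K c i) = length u + i.
Proof.
  unfold depth, stage. rewrite length_firstn.
  pose proof (prefix_length _ _ (proj1 (target_bad_ext u K Hu c))). lia.
Qed.

Lemma stage_mono i i' : i <= i' -> prefix (stage u K c i) (stage u K c i').
Proof. intro H. apply prefix_firstn_mono. lia. Qed.

Lemma stage_0 : stage u K c 0 = u.
Proof.
  unfold stage. rewrite Nat.add_0_r. symmetry. apply prefix_eq_firstn, target_bad_ext, Hu.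
Qed.

Lemma prefix_stage i : prefix u (stage u K c i).
Proof. rewrite <- stage_0 at 1. apply stage_mono. lia. Qed.

Lemma stage_on_thread i : on_thread u K (stage u K c i) c.
Proof. apply prefix_firstn. Qed.

Lemma stage_bad i : ~ inU K (stage u K c i).
Proof.
  intro H. apply (proj2 (target_bad_ext u K Hu c)), inU_prefix with (stage u K c i); auto.
  apply stage_on_thread.
Qed.

Lemma stage_piece_infinite i : infinite_nat (piece u K c (stage u K c i)).
Proof. apply piece_infinite; auto using prefix_stage, stage_bad, stage_on_thread. Qed.

Lemma stage_of_on_thread s : prefix u s -> on_thread u K s c ->
  length s - length u <= depth u K c /\ stage u K c (length s - length u) = s.
Proof.
  intros Hus Hs. pose proof (prefix_length _ _ Hus). pose proof (prefix_length _ _ Hs).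
  split; [unfold depth; lia|]. unfold stage.
  replace (length u + (length s - length u)) with (length s) by lia.
  symmetry. apply prefix_eq_firstn, Hs.
Qed.

End Stages.

(* [Cyl u K] is the cylinder over [u], already inside [U 0], ..., [U (K-1)].  [Thread u K c i]
   lies below a cylinder [u] not inside [U K]; it collects the sons [stage i' ++ [n]],
   [i <= i' <= depth], [n] in the piece of thread [c]; its son [0] moves on to stage [i + 1]. *)
Inductive node := Cyl (u : list nat) (K : nat) | Thread (u : list nat) (K c i : nat).

Definition child (d : node) (m : nat) : node :=
  match d with
  | Cyl u K =>
      if excluded_middle_informative (inU K u) then Cyl (u ++ [m]) (S K) else Thread u K m 0
  | Thread u K c i =>
      if lt_dec i (depth u K c) then
        match m with
        | 0 => Thread u K c (S i)
        | S j => Cyl (stage u K c i ++ [enum (piece u K c (stage u K c i)) j]) (S K)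
        end
      else Cyl (stage u K c i ++ [enum (piece u K c (stage u K c i)) m]) (S K)
  end.

Definition region (d : node) : baire -> Prop :=
  match d with
  | Cyl u K => S_std u
  | Thread u K c i => fun q => exists i' n, (i <= i' <= depth u K c) /\
      piece u K c (stage u K c i') n /\ S_std (stage u K c i' ++ [n]) q
  end.

Definition stem (d : node) : list nat :=
  match d with Cyl u _ => u | Thread u K c i => stage u K c i end.

Definition node_ok (d : node) : Prop :=
  match d with
  | Cyl u K => forall k, k < K -> inU k u
  | Thread u K c i => (forall k, k < K -> inU k u) /\ ~ inU K u /\ i <= depth u K c
  end.

Lemma region_stem d q : region d q -> S_std (stem d) q.
Proof.
  destruct d as [u K|u K c i]; simpl; [tauto|].
  intros [i' [n [[Hi _] [_ Hq]]]]. apply S_std_snoc in Hq.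
  apply S_std_prefix with (stage u K c i'); [apply stage_mono|]; tauto.
Qed.

Lemma child_ok d m : node_ok d -> node_ok (child d m).
Proof.
  destruct d as [u K|u K c i]; simpl.
  - intro H. destruct excluded_middle_informative as [Hin|Hb]; simpl.
    + intros k Hk. apply inU_prefix with u; [apply prefix_app|].
      destruct (Nat.eq_dec k K) as [->|]; auto. apply H. lia.
    + split; auto. split; auto. lia.
  - intros [H1 [H2 H3]].
    assert (Hcyl : forall n, piece u K c (stage u K c i) n ->
      node_ok (Cyl (stage u K c i ++ [n]) (S K))).
    { intros n [Hg _] k Hk. simpl. destruct (Nat.eq_dec k K) as [->|]; [exact Hg|].
      apply inU_prefix with u; [|apply H1; lia].
      apply prefix_trans with (stage u K c i); [apply prefix_stage; auto|apply prefix_app]. }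
    destruct lt_dec; [destruct m|]; [simpl; auto| |];
      apply Hcyl, enum_in, stage_piece_infinite; exact H2.
Qed.

Lemma region_Thread_split u K c i q : ~ inU K u -> i <= depth u K c ->
  region (Thread u K c i) q <->
  (exists n, piece u K c (stage u K c i) n /\ S_std (stage u K c i ++ [n]) q) \/
  (i < depth u K c /\ region (Thread u K c (S i)) q).
Proof.
  intros Hu Hi. simpl. split.
  - intros [i' [n [Hi' Hq]]]. destruct (Nat.eq_dec i i') as [<-|Hne]; [left; eauto|].
    right. split; [lia|]. exists i', n. split; [lia|exact Hq].
  - intros [[n Hn]|[Hl [i' [n [Hi' Hq]]]]]; [exists i, n; split; [lia|exact Hn]|].
    exists i', n. split; [lia|exact Hq].
Qed.

Lemma region_Cyl_bad_sons u K q : U K q -> ~ inU K u ->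
  S_std u q <-> exists c, region (Thread u K c 0) q.
Proof.
  intros HK Hu. split.
  - intro Hq. destruct (last_bad_prefix K u q HK Hq Hu) as [d [Hd [Hbad Hgood]]].
    assert (Hus : prefix u (init q d)).
    { apply (S_std_prefix_of_le _ _ q); auto using S_std_init_self. rewrite init_length. lia. }
    destruct (piece_exists u K (init q d) (q d) Hgood) as [c Hc].
    destruct (stage_of_on_thread u K c (init q d) Hus) as [Hdep Hst];
      [apply (piece_on_thread u K (init q d) Hus Hbad c (q d) Hc)|].
    exists c, (length (init q d) - length u), (q d). rewrite Hst. split; [lia|].
    split; [exact Hc|]. rewrite <- init_S. apply S_std_init_self.
  - intros [c Hc]. apply region_stem in Hc. simpl in Hc. rewrite stage_0 in Hc; auto.
Qed.

Lemma region_sons d q : node_ok d -> Y q -> (region d q <-> exists m, region (child d m) q).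
Proof.
  intros Hd HY. destruct d as [u K|u K c i]; simpl child.
  - destruct excluded_middle_informative as [Hin|Hb].
    + simpl. split; [intro Hq; exists (q (length u))|intros [m Hm]];
        rewrite S_std_snoc in *; tauto.
    + apply region_Cyl_bad_sons; auto.
  - destruct Hd as [_ [Hu Hi]]. rewrite region_Thread_split by auto.
    assert (Hpiece : (exists n, piece u K c (stage u K c i) n /\ S_std (stage u K c i ++ [n]) q) <->
      exists j, region (Cyl (stage u K c i ++ [enum (piece u K c (stage u K c i)) j]) (S K)) q).
    { simpl. split.
      - intros [n [Hn Hq]]. destruct (enum_surj _ (stage_piece_infinite u K c Hu i) n Hn) as [j <-].
        eauto.
      - intros [j Hj]. eexists. split; [|exact Hj]. apply enum_in, stage_piece_infinite, Hu. }
    rewrite Hpiece. destruct lt_dec as [Hl|Hl].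
    + split.
      * intros [[j Hj]|[_ Hj]]; [exists (S j)|exists 0]; exact Hj.
      * intros [[|j] Hj]; [right; split; auto|left; exists j; exact Hj].
    + split; [intros [Hj|[Hc _]]; [exact Hj|lia]|intro Hj; left; exact Hj].
Qed.

Lemma bad_stage_below_piece u K c c' j j' n q : ~ inU K u ->
  j <= depth u K c -> j' <= depth u K c' -> piece u K c (stage u K c j) n ->
  S_std (stage u K c j ++ [n]) q -> S_std (stage u K c' j') q -> j' <= j.
Proof.
  intros Hu Hj Hj' Hn Hq Hq'. destruct (le_lt_dec j' j) as [|Hlt]; [assumption|].
  exfalso. apply (good_above_bad K _ _ _ q (proj1 Hn) Hq Hq'); [apply stage_bad, Hu|].
  rewrite !stage_length by auto. lia.
Qed.

Lemma region_Thread_unique u K c c' i i' q : ~ inU K u ->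
  region (Thread u K c i) q -> region (Thread u K c' i') q -> c = c'.
Proof.
  intros Hu [j [n [[_ Hj] [Hn Hq]]]] [j' [n' [[_ Hj'] [Hn' Hq']]]].
  pose proof (proj1 (proj1 (S_std_snoc _ _ _) Hq)) as Hs.
  pose proof (proj1 (proj1 (S_std_snoc _ _ _) Hq')) as Hs'.
  assert (Hjj : j = j') by (apply Nat.le_antisymm; eapply bad_stage_below_piece; eauto).
  subst j'.
  assert (Hst : stage u K c j = stage u K c' j)
    by (apply (S_std_length_inj _ _ q); auto; rewrite !stage_length by (auto; lia); reflexivity).
  rewrite Hst in Hn, Hq. apply S_std_snoc in Hq, Hq'.
  replace n' with n in Hn' by (destruct Hq, Hq'; congruence).
  apply (piece_unique u K c c' _ n Hn Hn').
Qed.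

Lemma region_sons_disjoint d n m q : node_ok d -> n <> m ->
  region (child d n) q -> region (child d m) q -> False.
Proof.
  intros Hd Hnm. destruct d as [u K|u K c i]; simpl child.
  - destruct excluded_middle_informative as [Hin|Hb]; simpl.
    + intros Hn Hm. apply S_std_snoc in Hn, Hm. destruct Hn, Hm. congruence.
    + intros Hn Hm. exact (Hnm (region_Thread_unique u K n m 0 0 q Hb Hn Hm)).
  - destruct Hd as [_ [Hu Hi]].
    set (s := stage u K c i). set (g := enum (piece u K c s)).
    assert (Hcyl : forall j j', j <> j' -> region (Cyl (s ++ [g j]) (S K)) q ->
      region (Cyl (s ++ [g j']) (S K)) q -> False).
    { simpl. intros j j' Hjj Hj Hj'. apply S_std_snoc in Hj, Hj'. destruct Hj, Hj'. apply Hjj.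
      apply (enum_inj _ (stage_piece_infinite u K c Hu i)). fold s g. congruence. }
    assert (Hnext : forall j, i < depth u K c -> region (Cyl (s ++ [g j]) (S K)) q ->
      region (Thread u K c (S i)) q -> False).
    { intros j Hl Hj Hthr. apply region_stem in Hthr.
      enough (S i <= i) by lia.
      apply (bad_stage_below_piece u K c c i (S i) (g j) q); auto; try lia.
      apply enum_in, stage_piece_infinite, Hu. }
    fold s g. destruct lt_dec as [Hl|Hl]; [|apply Hcyl; exact Hnm].
    destruct n as [|n], m as [|m]; intros Hn Hm.
    + exact (Hnm eq_refl).
    + exact (Hnext m Hl Hm Hn).
    + exact (Hnext n Hl Hn Hm).
    + apply (Hcyl n m); auto.
Qed.

Definition node_at (x : list nat) : node := fold_left child x (Cyl [] 0).

Lemma node_at_snoc x n : node_at (x ++ [n]) = child (node_at x) n.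
Proof. unfold node_at. rewrite fold_left_app. reflexivity. Qed.

Lemma node_at_ok x : node_ok (node_at x).
Proof.
  induction x as [|x n IH] using rev_ind; [simpl; lia|].
  rewrite node_at_snoc. apply child_ok, IH.
Qed.

Lemma stem_child d m : node_ok d -> prefix (stem d) (stem (child d m)).
Proof.
  destruct d as [u K|u K c i]; simpl; intro Hd.
  - destruct excluded_middle_informative; simpl; [apply prefix_app|].
    rewrite stage_0 by auto. apply prefix_refl.
  - destruct lt_dec; [destruct m; simpl; [apply stage_mono; lia|]|]; apply prefix_app.
Qed.

Lemma stem_child_Thread u K c i m : node_ok (Thread u K c i) ->
  length (stem (child (Thread u K c i) m)) = S (length (stage u K c i)).
Proof.
  intros [_ [Hu Hi]]. simpl. destruct lt_dec; [destruct m|]; simpl.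
  - rewrite !stage_length by (auto; lia). lia.
  - rewrite length_app. simpl. lia.
  - rewrite length_app. simpl. lia.
Qed.

Definition fans_out (d : node) (z : list nat) : Prop :=
  exists off K (g : nat -> nat),
    (forall k, k <= g k) /\ forall k, child d (k + off) = Cyl (z ++ [g k]) (S K).

Lemma Cyl_fans_out u K : inU K u -> fans_out (Cyl u K) u.
Proof.
  intro Hin. exists 0, K, (fun k => k). split; [auto|]. intro k. simpl.
  destruct excluded_middle_informative; [|tauto]. rewrite Nat.add_0_r. reflexivity.
Qed.

Lemma Thread_fans_out u K c i :
  node_ok (Thread u K c i) -> fans_out (Thread u K c i) (stage u K c i).
Proof.
  intros [_ [Hu _]].
  exists (if lt_dec i (depth u K c) then 1 else 0), K, (enum (piece u K c (stage u K c i))).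
  split; [intro k; apply enum_ge, stage_piece_infinite, Hu|].
  intro k. simpl. destruct lt_dec; rewrite ?Nat.add_1_r, ?Nat.add_0_r; reflexivity.
Qed.

(* A bad [Cyl] moves to a [Thread] with the same stem, hence the extra unit for [Cyl]. *)
Definition descent_measure (j : nat) (d : node) : nat :=
  2 * (j - length (stem d)) + match d with Cyl _ _ => 1 | Thread _ _ _ _ => 0 end.

Lemma descent_step d p j : node_ok d -> Y p -> region d p -> length (stem d) <= j ->
  (length (stem d) = j -> ~ fans_out d (stem d)) ->
  exists m, region (child d m) p /\ length (stem (child d m)) <= j /\
    descent_measure j (child d m) < descent_measure j d.
Proof.
  intros Hd HY Hp Hj Hstuck. unfold descent_measure.
  destruct d as [u K|u K c i]; simpl in Hp, Hj.
  - simpl. destruct (excluded_middle_informative (inU K u)) as [Hin|Hb].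
    + assert (Hlt : length u < j).
      { destruct (Nat.eq_dec (length u) j); [|lia].
        exfalso. apply Hstuck; auto. apply Cyl_fans_out, Hin. }
      exists (p (length u)). simpl. rewrite length_app, S_std_snoc. simpl. repeat split; auto; lia.
    + destruct (proj1 (region_Cyl_bad_sons u K p (HY K) Hb) Hp) as [m Hm].
      exists m. simpl. rewrite stage_0 by auto. split; [exact Hm|lia].
  - assert (Hlt : length (stage u K c i) < j).
    { destruct (Nat.eq_dec (length (stage u K c i)) j); [|lia].
      exfalso. apply Hstuck; auto. apply Thread_fans_out, Hd. }
    destruct (proj1 (region_sons _ p Hd HY) Hp) as [m Hm].
    pose proof (stem_child_Thread u K c i m Hd) as Hlen.
    exists m. split; [exact Hm|]. rewrite Hlen. cbn [stem]. split; [lia|].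
    destruct (child (Thread u K c i) m); lia.
Qed.

Lemma fanning_node p j : Y p -> exists x, region (node_at x) p /\ fans_out (node_at x) (init p j).
Proof.
  intro HY.
  enough (H : forall n x, descent_measure j (node_at x) = n -> region (node_at x) p ->
    length (stem (node_at x)) <= j ->
    exists x', region (node_at x') p /\ fans_out (node_at x') (init p j)).
  { apply (H _ [] eq_refl (S_std_nil p)). simpl. lia. }
  intro n. induction n as [n IH] using lt_wf_ind. intros x Hn Hp Hj.
  assert (Hstem : stem (node_at x) = init p (length (stem (node_at x))))
    by (apply S_std_init, region_stem, Hp).
  destruct (classic (length (stem (node_at x)) = j /\ fans_out (node_at x) (stem (node_at x))))
    as [[Hlen Hfan]|Hmove].
  - exists x. split; [exact Hp|]. rewrite <- Hlen, <- Hstem. exact Hfan.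
  - destruct (descent_step (node_at x) p j (node_at_ok x) HY Hp Hj) as [m [Hm [Hmj Hdec]]];
      [tauto|].
    apply (IH _ (Nat.lt_le_trans _ _ _ Hdec (Nat.eq_le_incl _ _ Hn)) (x ++ [m]));
      rewrite ?node_at_snoc; auto.
Qed.

Section BranchPoint.
Variable beta : baire.

Definition visited (j : nat) : node := node_at (init beta j).

Lemma visited_S j : visited (S j) = child (visited j) (beta j).
Proof. unfold visited. rewrite init_S, node_at_snoc. reflexivity. Qed.

(* Threads are finite: this is why the level [K] is unbounded along every branch. *)
Lemma Thread_reaches_Cyl n j u K c i : visited j = Thread u K c i -> depth u K c - i = n ->
  exists j' u', visited j' = Cyl u' (S K) /\ length u + i < length u'.
Proof.
  revert j i. induction n as [|n IH]; intros j i Hj Hn;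
    pose proof (node_at_ok (init beta j)) as Hok; fold (visited j) in Hok;
    rewrite Hj in Hok; destruct Hok as [_ [Hu Hi]].
  - exists (S j), (stage u K c i ++ [enum (piece u K c (stage u K c i)) (beta j)]).
    rewrite visited_S, Hj. simpl. destruct lt_dec; [lia|].
    split; [reflexivity|]. rewrite length_app, stage_length by auto. simpl. lia.
  - destruct (beta j) as [|b] eqn:Hb.
    + destruct (IH (S j) (S i)) as [j' [u' [Hj' Hlen]]]; [|lia|].
      * rewrite visited_S, Hj, Hb. simpl. destruct lt_dec; [reflexivity|lia].
      * exists j', u'. split; [exact Hj'|lia].
    + exists (S j). rewrite visited_S, Hj, Hb. simpl. destruct lt_dec; [|lia].
      eexists. split; [reflexivity|]. rewrite length_app, stage_length by auto. simpl. lia.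
Qed.

Lemma Cyl_reaches_Cyl j u K : visited j = Cyl u K ->
  exists j' u', visited j' = Cyl u' (S K) /\ length u < length u'.
Proof.
  intro Hj. destruct (excluded_middle_informative (inU K u)) as [Hin|Hb].
  - exists (S j), (u ++ [beta j]). rewrite visited_S, Hj. simpl.
    destruct excluded_middle_informative; [|tauto].
    split; [reflexivity|]. rewrite length_app. simpl. lia.
  - assert (HS : visited (S j) = Thread u K (beta j) 0).
    { rewrite visited_S, Hj. simpl. destruct excluded_middle_informative; [tauto|reflexivity]. }
    destruct (Thread_reaches_Cyl _ (S j) u K (beta j) 0 HS eq_refl) as [j' [u' [Hj' Hlen]]].
    exists j', u'. split; [exact Hj'|lia].
Qed.

Lemma visits_deep_Cyl N : exists j u K, visited j = Cyl u K /\ N <= K /\ N <= length u.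
Proof.
  induction N as [|N [j [u [K [Hj [HK Hu]]]]]]; [exists 0, [], 0; auto|].
  destruct (Cyl_reaches_Cyl j u K Hj) as [j' [u' [Hj' Hlen]]].
  exists j', u', (S K). split; [exact Hj'|lia].
Qed.

Lemma stem_visited_mono j j' : j <= j' -> prefix (stem (visited j)) (stem (visited j')).
Proof.
  induction 1 as [|j' _ IH]; [apply prefix_refl|].
  apply prefix_trans with (stem (visited j')); auto.
  rewrite visited_S. apply stem_child, node_at_ok.
Qed.

Lemma region_visited_antitone j j' q :
  j <= j' -> Y q -> region (visited j') q -> region (visited j) q.
Proof.
  intros Hjj' HY. induction Hjj' as [|j' _ IH]; auto. intro Hq. apply IH.
  apply (region_sons (visited j') q (node_at_ok _) HY).
  exists (beta j'). rewrite <- visited_S. exact Hq.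
Qed.

Definition stem_covering (i : nat) : nat :=
  epsilon (inhabits 0) (fun j => i < length (stem (visited j))).

Lemma stem_covering_spec i : i < length (stem (visited (stem_covering i))).
Proof.
  unfold stem_covering. apply epsilon_spec.
  destruct (visits_deep_Cyl (S i)) as [j [u [K [Hj [_ Hu]]]]].
  exists j. rewrite Hj. simpl. lia.
Qed.

Definition branch_point : baire := fun i => nth i (stem (visited (stem_covering i))) 0.

Lemma S_std_stem_branch_point j : S_std (stem (visited j)) branch_point.
Proof.
  intros i Hi. unfold branch_point. pose proof (stem_covering_spec i).
  destruct (le_lt_dec j (stem_covering i)) as [Hle|Hlt]; [symmetry|];
    apply prefix_nth; auto; apply stem_visited_mono; lia.
Qed.

Lemma branch_point_Y : Y branch_point.
Proof.
  intro n. destruct (visits_deep_Cyl (S n)) as [j [u [K [Hj [HK _]]]]].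
  pose proof (node_at_ok (init beta j)) as Hok. fold (visited j) in Hok. rewrite Hj in Hok.
  apply (Hok n); [lia|]. pose proof (S_std_stem_branch_point j) as Hs. rewrite Hj in Hs. exact Hs.
Qed.

Lemma branch_point_region j : region (visited j) branch_point.
Proof.
  destruct (visits_deep_Cyl (S (length (stem (visited j))))) as [j' [u [K [Hj' [_ Hu]]]]].
  assert (Hjj' : j <= j').
  { destruct (le_lt_dec j j') as [|Hlt]; [assumption|].
    pose proof (prefix_length _ _ (stem_visited_mono j' j ltac:(lia))) as Hlen.
    rewrite Hj' in Hlen. simpl in Hlen. lia. }
  apply region_visited_antitone with j'; auto using branch_point_Y.
  rewrite Hj'. pose proof (S_std_stem_branch_point j') as Hs. rewrite Hj' in Hs. exact Hs.
Qed.

Lemma branch_point_unique q : (forall j, region (visited j) q) -> q = branch_point.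
Proof.
  intro Hq. apply functional_extensionality. intro i. unfold branch_point.
  apply (region_stem _ _ (Hq (stem_covering i))), stem_covering_spec.
Qed.

End BranchPoint.

Definition leaf (x : list nat) (q : baire) : Prop := Y q /\ region (node_at x) q.

Lemma leaf_nonempty x : exists q, leaf x q.
Proof.
  set (beta := fun i => nth i x 0).
  assert (Hx : init beta (length x) = x) by (symmetry; apply S_std_init; intros i _; reflexivity).
  exists (branch_point beta). split; [apply branch_point_Y|].
  pose proof (branch_point_region beta (length x)) as H. unfold visited in H.
  rewrite Hx in H. exact H.
Qed.

Lemma region_baire_open d : baire_open (region d).
Proof.
  destruct d as [u K|u K c i]; simpl.
  - intros p Hp. exists (length u). intros q Hq i Hi. rewrite Hq by auto. apply Hp, Hi.
  - intros p [i' [n [Hi' [Hn Hp]]]]. exists (length (stage u K c i' ++ [n])). intros q Hq.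
    exists i', n. split; [exact Hi'|]. split; [exact Hn|].
    intros k Hk. rewrite Hq by exact Hk. apply Hp, Hk.
Qed.

Lemma leaf_locally_strict : locally_strict leaf.
Proof.
  intros x _. split.
  - intro q. unfold leaf. split.
    + intros [HY Hq]. apply (region_sons _ q (node_at_ok x) HY) in Hq. destruct Hq as [m Hm].
      exists (x ++ [m]). rewrite node_at_snoc. split; [exists m; reflexivity|auto].
    + intros [s [[m ->] [HY Hm]]]. rewrite node_at_snoc in Hm. split; [exact HY|].
      apply (region_sons _ q (node_at_ok x) HY). eauto.
  - intros s t q [n ->] [m ->] Hst [_ Hs] [_ Ht]. rewrite node_at_snoc in Hs, Ht.
    apply (region_sons_disjoint (node_at x) n m q (node_at_ok x)); auto.
    intros ->. apply Hst. reflexivity.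
Qed.

Lemma leaf_strict_branches : strict_branches leaf.
Proof.
  intros B HB. destruct (branch_is_cylinders B HB) as [beta Hbeta].
  exists (branch_point beta). intro q. split.
  - intro Hq. apply (branch_point_unique beta). intro j. apply Hq, Hbeta, S_std_init_self.
  - intros -> x Hx. apply Hbeta, S_std_init in Hx. rewrite Hx.
    split; [apply branch_point_Y|apply branch_point_region].
Qed.

Lemma leaf_root q : leaf [] q <-> Y q.
Proof. unfold leaf. simpl. split; [tauto|]. intro HY. split; [exact HY|apply S_std_nil]. Qed.

Lemma shoot_leaf_fans_out x z M (A : baire -> Prop) : fans_out (node_at x) z ->
  (forall n q, M < n -> S_std (z ++ [n]) q -> A q) ->
  exists G, shoot leaf x G /\ (exists q, G q) /\ forall q, G q -> Y q /\ A q.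
Proof.
  intros [off [K [g [Hg Hsons]]]] HA.
  set (C := fun s => exists k, s = x ++ [k + off] /\ M < g k).
  exists (fun q => exists s, C s /\ leaf s q). split; [|split].
  - exists C. split; [split|reflexivity].
    + intros s [k [-> _]]. exists (k + off). reflexivity.
    + exists (map (fun m => x ++ [m]) (seq 0 (S M + off))).
      intros s [[m ->] HC]. apply (in_map (fun m => x ++ [m])), in_seq. split; [lia|].
      destruct (le_lt_dec off m) as [Hm|Hm]; [|lia].
      destruct (le_lt_dec (m - off) M) as [Hk|Hk]; [lia|].
      exfalso. apply HC. exists (m - off). split; [do 3 f_equal; lia|].
      pose proof (Hg (m - off)). lia.
  - destruct (leaf_nonempty (x ++ [S M + off])) as [q Hq]. exists q, (x ++ [S M + off]).
    split; [|exact Hq]. exists (S M). split; [reflexivity|]. pose proof (Hg (S M)). lia.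
  - intros q [s [[k [-> Hk]] [HY Hq]]]. rewrite node_at_snoc, Hsons in Hq.
    split; [exact HY|]. apply (HA (g k)); auto.
Qed.

End Construction.

Lemma baire_open_tau (tau : (baire -> Prop) -> Prop) : is_topology tau ->
  (forall x, open_in tau (fun _ => True) (S_std x)) ->
  forall A, baire_open A -> exists V, tau V /\ forall q, V q <-> A q.
Proof.
  intros [_ [_ Hunion]] Hcyl A HA.
  exists (fun q => exists V, (tau V /\ forall r, V r -> A r) /\ V q). split.
  - apply Hunion. intros V [HV _]. exact HV.
  - intro q. split; [intros [V [[_ HV] Hq]]; apply HV, Hq|intro Hq].
    destruct (HA q Hq) as [k Hk]. destruct (Hcyl (init q k)) as [V [HV HVe]].
    exists V. split; [split; [exact HV|]|apply (proj1 (HVe q) (S_std_init_self q k))].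
    intros r Hr. apply Hk. intros i Hi.
    rewrite (proj2 (HVe r) (conj Hr I) i) by (rewrite init_length; exact Hi). apply init_nth, Hi.
Qed.

Lemma shoot_S_std_cofinal z (W : baire -> Prop) : (exists q, W q) ->
  gg (shoot S_std z) (fun D => D = W) -> exists M, forall n q, M < n -> S_std (z ++ [n]) q -> W q.
Proof.
  intros HW Hgg. destruct (Hgg W eq_refl HW) as [G [[C [[_ Hfin] HG]] [_ HGW]]].
  destruct (is_finite_bounded (fun n => ~ C (z ++ [n]))) as [M HM].
  { destruct Hfin as [l Hl]. exists (map (fun s => last s 0) l). intros n Hn.
    rewrite <- (last_last z n 0). apply (in_map (fun s => last s 0)), Hl.
    split; [exists n; reflexivity|exact Hn]. }
  exists M. intros n q Hn Hq. apply HGW, HG. exists (z ++ [n]). split; [|exact Hq].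
  apply NNPP. intro HC. specialize (HM n HC). lia.
Qed.

Section Topology.
Variable tau : (baire -> Prop) -> Prop.
Variable U : nat -> baire -> Prop.
Hypothesis HU : forall n, baire_open (U n) /\ pi_dense (U n).

Lemma leaf_open : is_topology tau -> (forall x, open_in tau (fun _ => True) (S_std x)) ->
  forall x, open_in tau (Y U) (leaf U x).
Proof.
  intros Htop Hcyl x.
  destruct (baire_open_tau tau Htop Hcyl _ (region_baire_open U (node_at U x))) as [V [HV HVe]].
  exists V. split; [exact HV|]. intro q. rewrite HVe. unfold leaf. tauto.
Qed.

Lemma leaf_grows_into : grows_into tau (fun _ => True) S_std -> grows_into tau (Y U) (leaf U).
Proof.
  intros HSgrow p V Hp [W [HW HVW]] HVp.
  assert (HWp : W p) by (apply HVW in HVp; tauto).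
  assert (HWopen : open_in tau (fun _ => True) W) by (exists W; split; [exact HW|tauto]).
  destruct (HSgrow p W I HWopen HWp) as [z [Hz Hgg]].
  destruct (shoot_S_std_cofinal z W (ex_intro _ p HWp) Hgg) as [M HM].
  destruct (fanning_node U HU p (length z) Hp) as [x [Hx Hfan]].
  rewrite <- (proj1 (S_std_init z p) Hz) in Hfan.
  exists x. split; [split; assumption|]. intros D -> _.
  destruct (shoot_leaf_fans_out U HU x z M W Hfan HM) as [G [HG [HGne HGV]]].
  exists G. split; [exact HG|]. split; [exact HGne|].
  intros q Hq. apply HVW. destruct (HGV q Hq). split; assumption.
Qed.

End Topology.

Theorem mainTheorem3
  (tau : (baire -> Prop) -> Prop)
  (Htop : is_topology tau)
  (HS : pi_tree tau (fun _ => True) S_std)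
  (U : nat -> baire -> Prop)
  (HU : forall n, baire_open (U n) /\ pi_dense (U n)) :
  exists F : list nat -> baire -> Prop,
    pi_tree tau (fun q => forall n, U n q) F.
Proof.
  destruct HS as [[Hcyl _] HSgrow].
  exists (leaf U). split; [split; [|split; [|split]]|].
  - exact (leaf_open tau U Htop Hcyl).
  - exact (leaf_locally_strict U HU).
  - exact (leaf_strict_branches U HU).
  - exact (leaf_root U).
  - exact (leaf_grows_into tau U HU HSgrow).
Qed.
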